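(* Consider the mining game with $N\ge 2$ miners, costs-per-hash $0<c_1\le\dots\le c_N$, reward $R>0$ and capacity parameter $\gamma\ge0$, let $h^*$ be its unique equilibrium hash rate profile, $H^*=\sum_j h_j^*>0$, and let $n$ be the number of active miners. Define the equilibrium marginal cost of miner $i$ by $MC_i^*:=c_i+\gamma h_i^*$, $1\le i\le N$. Then $(MC_i^* )_{1\le i\le N}$ is an increasing sequence, and for each $i$, $$MC_i^*<\frac{R}{H^*}\iff c_i<\frac{R}{H^*}\iff 1\le i\le n.$$ Moreover, the sequence $(c_i/MC_i^* )_{1\le i\le N}$ is increasing and the sequence $(\gamma h_i^*/MC_i^* )_{1\le i\le N}$ is decreasing.
   Context: Mining game: $N\ge2$ miners with costs-per-hash $0<c_1\le\dots\le c_N$; each miner $i$ chooses $h_i\ge0$, $H=\sum_j h_j$, and the payoff of miner $i$ is $\frac{h_i}{H}R-c_ih_i-\frac{\gamma}{2}h_i^2$ if $H>0$, and $0$ if $H=0$, where $R>0$ and $\gamma\ge 0$. An equilibrium hash rate profile is a pure-strategy Nash equilibrium $h^*\in[0,\infty)^N$ of this game; it exists and is unique. Miner $i$ is active if $h_i^*>0$. A sequence $(x_i)$ is called increasing if $x_i\le x_{i+1}$ for all $i$ and decreasing if $x_i\ge x_{i+1}$ for all $i$. *)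

(* reals as an abstract R : realFieldType. Miners are indexed
   by 'I_N (miner i of the paper is the ordinal i-1). *)
From mathcomp Require Import all_boot all_order all_algebra.
Set Implicit Arguments. Unset Strict Implicit. Unset Printing Implicit Defensive.
Import Order.TTheory GRing.Theory Num.Theory.
Local Open Scope ring_scope.

Section Mining.
Variables (R : realFieldType) (N : nat).

Definition total_hash (h : 'I_N -> R) : R := \sum_(j < N) h j.

Definition payoff (Rw gamma : R) (c : 'I_N -> R) (h : 'I_N -> R) (i : 'I_N) : R :=
  if 0 < total_hash h then
    h i / total_hash h * Rw - c i * h i - gamma / 2%:R * h i ^+ 2
  else 0.

Definition deviate (h : 'I_N -> R) (i : 'I_N) (x : R) : 'I_N -> R :=
  fun j => if j == i then x else h j.

Definition is_equilibrium (Rw gamma : R) (c : 'I_N -> R) (h : 'I_N -> R) : Prop :=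
  (forall i, 0 <= h i) /\
  (forall i (x : R), 0 <= x ->
     payoff Rw gamma c (deviate h i x) i <= payoff Rw gamma c h i).

Definition increasing_seq (x : 'I_N -> R) : Prop :=
  forall i j : 'I_N, nat_of_ord j = (nat_of_ord i).+1 -> x i <= x j.

Definition decreasing_seq (x : 'I_N -> R) : Prop :=
  forall i j : 'I_N, nat_of_ord j = (nat_of_ord i).+1 -> x j <= x i.

Definition num_active (h : 'I_N -> R) : nat := #|[set i : 'I_N | 0 < h i]|.

End Mining.

From mathcomp Require Import all_boot all_order all_algebra.
From mathcomp Require Import ring lra.
Import Order.TTheory GRing.Theory Num.Theory.
Set Implicit Arguments. Unset Strict Implicit. Unset Printing Implicit Defensive.
Local Open Scope ring_scope.

(* Fix a miner and the total S of the other miners' hash rates. Its payoff u(x)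
   as a function of its own rate x satisfies the exact expansion
   u(x) - u(y) = (x - y) u'(y) - (x - y)^2 k(x) with k bounded near y, so an
   equilibrium rate y satisfies u'(y) <= 0, with equality when y > 0. With
   P = R/H these conditions read MC_i >= P - (R/H^2) h_i, with equality for
   active miners. Hence miner i is active iff c_i < P, hash rates decrease and
   marginal costs increase along increasing costs, and the ratio c_i / MC_i
   increases because c_i increases while h_i decreases. *)

Lemma le0_of_le_linear (R : realFieldType) (m K T : R) :
  0 < T -> 0 <= K -> (forall t : R, 0 < t <= T -> m <= t * K) -> m <= 0.
Proof.
move=> T_gt0 K_ge0 small; rewrite leNgt; apply/negP => m_gt0.
have den_gt0 : 0 < T * K + m by nra.
pose t := T * m / (T * K + m).
have t_gt0 : 0 < t by rewrite /t; apply: divr_gt0; nra.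
have t_leT : t <= T by rewrite /t ler_pdivrMr //; nra.
have := small t; rewrite t_gt0 t_leT => /(_ isT).
rewrite /t mulrAC ler_pdivlMr //; nra.
Qed.

Lemma increasing_seq_homo (R : realFieldType) (N : nat) (x : 'I_N -> R) :
  increasing_seq x -> forall i j : 'I_N, (i <= j)%N -> x i <= x j.
Proof.
move=> x_inc i j; pose f n := x (insubd i n).
have f_homo : {in [pred n | (n < N)%N] &, {homo f : m n / (m <= n)%N >-> m <= n}}.
  apply: homo_leq_in => [y|y z t /le_trans|m n _ n_lt k /andP[_ kn]|m m_lt m1_lt].
  - exact: lexx.
  - exact.
  - by rewrite inE (ltn_trans kn).
  - by rewrite /f; apply: x_inc; rewrite !insubdK.
by move=> ij; have := f_homo i j (ltn_ord i) (ltn_ord j) ij; rewrite /f !valKd.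
Qed.

Lemma card_ord_lt (N n : nat) : (n <= N)%N -> #|[set j : 'I_N | (j < n)%N]| = n.
Proof.
move=> nN; have -> : [set j : 'I_N | (j < n)%N] = widen_ord nN @: [set: 'I_n].
  apply/setP => j; rewrite inE; apply/idP/imsetP => [jn | [k _ ->]].
    by exists (Ordinal jn) => //; apply: val_inj.
  exact: (ltn_ord k).
have widen_inj : injective (widen_ord nN) by move=> a b [] /val_inj.
by rewrite card_imset // cardsT card_ord.
Qed.

Lemma mem_downclosed_card (N : nat) (S : {set 'I_N}) :
  (forall i j : 'I_N, (i <= j)%N -> j \in S -> i \in S) ->
  forall i : 'I_N, (i \in S) = (i < #|S|)%N.
Proof.
move=> S_down i; apply/idP/idP => [iS | ].
  rewrite -(card_ord_lt (ltn_ord i)); apply/subset_leq_card/subsetP => j.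
  by rewrite inE ltnS => ji; apply: S_down ji iS.
apply: contraTT => iNS; rewrite -leqNgt -(card_ord_lt (ltnW (ltn_ord i))).
apply/subset_leq_card/subsetP => j jS; rewrite inE ltnNge.
by apply: contra iNS => ij; apply: S_down ij jS.
Qed.

Section OwnPayoff.
Variables (R : realFieldType) (Rw c g S : R).

Definition own_payoff (x : R) : R :=
  x / (S + x) * Rw - c * x - g / 2%:R * x ^+ 2.

Definition marginal_payoff (y : R) : R :=
  Rw * S / (S + y) ^+ 2 - (c + g * y).

Lemma own_payoff_sub x y : S + x != 0 -> S + y != 0 ->
  own_payoff x - own_payoff y =
  (x - y) * marginal_payoff y
    - (x - y) ^+ 2 * (Rw * S / ((S + y) ^+ 2 * (S + x)) + g / 2%:R).
Proof.
move=> Sx_neq0 Sy_neq0; rewrite /own_payoff /marginal_payoff.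
by field; rewrite Sx_neq0 Sy_neq0.
Qed.

Hypotheses (Rw_ge0 : 0 <= Rw) (S_ge0 : 0 <= S) (g_ge0 : 0 <= g).

Lemma own_payoff_sub_ge x y : 0 < S + y -> S + y <= 2%:R * (S + x) ->
  (x - y) * marginal_payoff y
    - (x - y) ^+ 2 * (2%:R * Rw * S / (S + y) ^+ 3 + g / 2%:R)
  <= own_payoff x - own_payoff y.
Proof.
move=> Sy_gt0 Sx_ge; have Sx_gt0 : 0 < S + x by lra.
rewrite own_payoff_sub ?gt_eqF // lerD2l lerN2 ler_wpM2l ?sqr_ge0 // lerD2r.
have -> : Rw * S / ((S + y) ^+ 2 * (S + x)) = Rw * S / (S + y) ^+ 2 / (S + x).
  by field; rewrite !gt_eqF.
have -> : 2%:R * Rw * S / (S + y) ^+ 3 = Rw * S / (S + y) ^+ 2 * (2%:R / (S + y)).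
  by field; rewrite gt_eqF.
rewrite ler_wpM2l ?divr_ge0 ?mulr_ge0 ?exprn_ge0 ?(ltW Sy_gt0) //.
by rewrite ler_pdivlMr // mulrC ler_pdivrMr.
Qed.

(* Deviations with S + x = 0 are excluded: there the game pays 0, not own_payoff. *)
Definition is_best_response (y : R) : Prop :=
  forall x, 0 <= x -> 0 < S + x -> own_payoff x <= own_payoff y.

Let curvature_ge0 y : 0 < S + y -> 0 <= 2%:R * Rw * S / (S + y) ^+ 3 + g / 2%:R.
Proof.
move=> Sy_gt0; apply: addr_ge0; last exact: divr_ge0.
by apply: divr_ge0; [rewrite !mulr_ge0 | rewrite exprn_ge0 ?ltW].
Qed.

Lemma marginal_payoff_le0 (y : R) :
  0 <= y -> 0 < S + y -> is_best_response y -> marginal_payoff y <= 0.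
Proof.
move=> y_ge0 Sy_gt0 best.
apply: (le0_of_le_linear ltr01 (curvature_ge0 Sy_gt0)) => t /andP[t_gt0 _].
have := own_payoff_sub_ge (x := y + t) Sy_gt0 ltac:(lra).
have := best (y + t) ltac:(lra) ltac:(lra).
rewrite addrAC subrr add0r expr2; nra.
Qed.

Lemma marginal_payoff_ge0 (y : R) : 0 < y -> is_best_response y -> 0 <= marginal_payoff y.
Proof.
move=> y_gt0 best; have Sy_gt0 : 0 < S + y := ltr_wpDl S_ge0 y_gt0.
rewrite -oppr_le0.
have half_y_gt0 : 0 < y / 2%:R by apply: divr_gt0.
apply: (le0_of_le_linear half_y_gt0 (curvature_ge0 Sy_gt0)) => t /andP[t_gt0 t_le].
have Sy_le : S + y <= 2%:R * (S + (y - t)) by have := S_ge0; lra.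
have := own_payoff_sub_ge (x := y - t) Sy_gt0 Sy_le.
have := best (y - t) ltac:(lra) ltac:(lra).
rewrite addrAC subrr add0r sqrrN expr2; nra.
Qed.

End OwnPayoff.

Lemma le_cost_share (R : realFieldType) (g a b x y : R) :
  0 <= g -> 0 < a -> a <= b -> 0 <= y -> y <= x ->
  a / (a + g * x) <= b / (b + g * y).
Proof.
move=> g_ge0 a_gt0 ab y_ge0 yx.
have gx_ge0 : 0 <= g * x by nra.
have gy_ge0 : 0 <= g * y by nra.
rewrite ler_pdivrMr ?ltr_wpDr // mulrAC ler_pdivlMr ?ltr_wpDr //; last lra.
have : a * (g * y) <= b * (g * x) by apply: ler_pM; rewrite ?ler_wpM2l //; lra.
nra.
Qed.

Section Equilibrium.
Variables (R : realFieldType) (N : nat) (Rw g : R) (c h : 'I_N -> R).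
Hypotheses (Rw_gt0 : 0 < Rw) (g_ge0 : 0 <= g) (c_gt0 : forall i, 0 < c i).
Hypothesis eq_h : is_equilibrium Rw g c h.

Local Notation H := (total_hash h).
Local Notation P := (Rw / total_hash h).
Local Notation MC i := (c i + g * h i).

Lemma total_hash_deviate i x : total_hash (deviate h i x) = H - h i + x.
Proof.
rewrite /total_hash (bigD1 i) //= [in RHS](bigD1 i) //= /deviate eqxx.
rewrite (eq_bigr h) => [|j /negbTE -> //]; ring.
Qed.

Lemma hash_ge0 i : 0 <= h i.
Proof. exact: eq_h.1. Qed.

Lemma hash_le_total i : h i <= H.
Proof.
by rewrite /total_hash (bigD1 i) //= lerDl sumr_ge0 // => j _; apply: hash_ge0.
Qed.

Lemma total_hash_gt0 : (0 < N)%N -> 0 < H.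
Proof.
move=> N_gt0; pose i := Ordinal N_gt0.
rewrite lt_def sumr_ge0 ?andbT => [|j _]; last exact: hash_ge0.
apply/negP => /eqP H_eq0.
have h_eq0 j : h j = 0.
  by apply: (psumr_eq0P (P := predT) _ H_eq0) => // k _; apply: hash_ge0.
pose x := Rw / (Rw + c i + g).
have den_gt0 : 0 < Rw + c i + g := ltr_wpDr g_ge0 (addr_gt0 Rw_gt0 (c_gt0 i)).
have x_gt0 : 0 < x by apply: divr_gt0.
have x_lt1 : x < 1.
  by rewrite ltr_pdivrMr // mul1r -addrA ltrDl ltr_wpDr ?c_gt0.
have x_den : x * (Rw + c i + g) = Rw by rewrite /x divfK ?gt_eqF.
have := eq_h.2 i x (ltW x_gt0).
rewrite /payoff total_hash_deviate H_eq0 h_eq0 ltxx subrr add0r x_gt0.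
rewrite /deviate eqxx mulfV ?gt_eqF // mul1r expr2.
have gxx_le : g * (x * x) <= g * x by rewrite ler_wpM2l //; nra.
move: (c_gt0 i) Rw_gt0 g_ge0; nra.
Qed.

Hypothesis N_gt0 : (0 < N)%N.
Let H_gt0 : 0 < H := total_hash_gt0 N_gt0.

Lemma best_response_hash i : is_best_response Rw (c i) g (H - h i) (h i).
Proof.
move=> x x_ge0 Sx_gt0; have := eq_h.2 i x x_ge0.
by rewrite /payoff total_hash_deviate Sx_gt0 H_gt0 /deviate eqxx /own_payoff subrK.
Qed.

Lemma marginal_payoff_hash i :
  marginal_payoff Rw (c i) g (H - h i) (h i) = P - Rw / H ^+ 2 * h i - MC i.
Proof. by rewrite /marginal_payoff subrK; field; rewrite gt_eqF. Qed.

Let others_hash_ge0 i : 0 <= H - h i.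
Proof. by rewrite subr_ge0 hash_le_total. Qed.

Let slope_gt0 : 0 < Rw / H ^+ 2.
Proof. by rewrite divr_gt0 ?exprn_gt0. Qed.

Lemma marginal_cost_ge i : P - Rw / H ^+ 2 * h i <= MC i.
Proof.
have S_hi_gt0 : 0 < H - h i + h i by rewrite subrK.
have := marginal_payoff_le0 (ltW Rw_gt0) (others_hash_ge0 i) g_ge0 (hash_ge0 i)
  S_hi_gt0 (best_response_hash (i := i)).
by rewrite marginal_payoff_hash subr_le0.
Qed.

Lemma marginal_cost_active i : 0 < h i -> MC i = P - Rw / H ^+ 2 * h i.
Proof.
move=> hi_gt0; apply/eqP; rewrite eq_le marginal_cost_ge andbT.
have := marginal_payoff_ge0 (ltW Rw_gt0) (others_hash_ge0 i) g_ge0 hi_gt0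
  (best_response_hash (i := i)).
by rewrite marginal_payoff_hash subr_ge0.
Qed.

Lemma hash_gt0E i : (0 < h i) = (c i < P).
Proof.
apply/idP/idP => [hi_gt0 | ci_lt].
  have ghi_ge0 : 0 <= g * h i by rewrite mulr_ge0 ?hash_ge0.
  have khi_gt0 : 0 < Rw / H ^+ 2 * h i by rewrite mulr_gt0.
  by have := marginal_cost_active hi_gt0; lra.
rewrite lt_def hash_ge0 andbT; apply: contraTneq ci_lt => hi_eq0.
by rewrite -leNgt; have := marginal_cost_ge i; rewrite hi_eq0 !mulr0 subr0 addr0.
Qed.

Lemma marginal_cost_ltE i : (MC i < P) = (c i < P).
Proof.
apply/idP/idP => [|ci_lt]; first by apply: le_lt_trans; rewrite lerDl mulr_ge0 ?hash_ge0.
have hi_gt0 : 0 < h i by rewrite hash_gt0E.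
by rewrite marginal_cost_active // ltrBlDr ltrDl mulr_gt0.
Qed.

Lemma hash_anti i j : c i <= c j -> h j <= h i.
Proof.
move=> cij; have [hj_gt0 | hj_le0] := ltP 0 (h j); last exact: le_trans (hash_ge0 i).
have hi_gt0 : 0 < h i by rewrite hash_gt0E (le_lt_trans cij) // -hash_gt0E.
have := marginal_cost_active hi_gt0; have := marginal_cost_active hj_gt0.
(* Subtracting the two equalities: (g + Rw / H^2) (h i - h j) = c j - c i. *)
by move: slope_gt0 g_ge0; nra.
Qed.

Lemma marginal_cost_homo i j : c i <= c j -> MC i <= MC j.
Proof.
move=> cij; have [hj_gt0 | hj_le0] := ltP 0 (h j).
  have hi_gt0 := lt_le_trans hj_gt0 (hash_anti cij).
  rewrite (marginal_cost_active hi_gt0) (marginal_cost_active hj_gt0).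
  by rewrite lerD2l lerN2 ler_wpM2l ?(ltW slope_gt0) // hash_anti.
have hj_eq0 : h j = 0 by apply/le_anti; rewrite hj_le0 hash_ge0.
have cj_ge : P <= c j by rewrite leNgt -hash_gt0E hj_eq0 ltxx.
rewrite hj_eq0 mulr0 addr0; have [hi_gt0 | hi_le0] := ltP 0 (h i).
  by apply: le_trans cj_ge; rewrite ltW // marginal_cost_ltE -hash_gt0E.
have -> : h i = 0 by apply/le_anti; rewrite hi_le0 hash_ge0.
by rewrite mulr0 addr0.
Qed.

Lemma cost_share_homo i j : c i <= c j -> c i / MC i <= c j / MC j.
Proof. by move=> cij; apply: le_cost_share; rewrite ?hash_ge0 ?hash_anti. Qed.

Lemma hash_share_anti i j : c i <= c j -> g * h j / MC j <= g * h i / MC i.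
Proof.
have share k : g * h k / MC k = 1 - c k / MC k.
  by field; rewrite gt_eqF // ltr_wpDr ?mulr_ge0 ?hash_ge0.
by move=> cij; rewrite !share lerD2l lerN2 cost_share_homo.
Qed.

Hypothesis c_inc : increasing_seq c.

Lemma num_active_gtE (i : 'I_N) : (i < num_active h)%N = (c i < P).
Proof.
rewrite /num_active -mem_downclosed_card ?inE ?hash_gt0E // => j k jk.
by rewrite !inE !hash_gt0E; apply: le_lt_trans; apply: increasing_seq_homo.
Qed.

End Equilibrium.

Theorem proposition4p2 (R : realFieldType) (N : nat) (Rw gamma : R)
    (c : 'I_N -> R) (h : 'I_N -> R) :
  (2 <= N)%N ->
  (forall i, 0 < c i) ->
  increasing_seq c ->
  0 < Rw ->
  0 <= gamma ->
  is_equilibrium Rw gamma c h ->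
  let H := total_hash h in
  let MC := fun i => c i + gamma * h i in
  0 < H /\
  increasing_seq MC /\
  (forall i : 'I_N,
     (MC i < Rw / H <-> c i < Rw / H) /\
     (c i < Rw / H <-> (nat_of_ord i < num_active h)%N)) /\
  increasing_seq (fun i => c i / MC i) /\
  decreasing_seq (fun i => gamma * h i / MC i).
Proof.
move=> N_ge2 c_gt0 c_inc Rw_gt0 g_ge0 eq_h /=.
have N_gt0 : (0 < N)%N := ltnW N_ge2.
split; first by apply: (total_hash_gt0 _ _ _ eq_h).
split; first by move=> i j /c_inc; apply: (marginal_cost_homo _ _ _ eq_h).
split=> [i|].
  by rewrite (marginal_cost_ltE _ _ _ eq_h) ?(num_active_gtE _ _ _ eq_h).
split=> i j /c_inc.
  by apply: (cost_share_homo _ _ _ eq_h).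
by apply: (hash_share_anti _ _ _ eq_h).
Qed.
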